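(* Let $A\in\mathbb{R}^{m\times n}$ be semi-monotone (i.e. $A^{\dagger}\geq 0$). Let $A=M-N=U-V$ be two proper regular splittings of $A$ such that $R(M+U-A)=R(A)$ and $N(M+U-A)=N(A)$. Suppose all row sums of $U^{\dagger}$ and of $M^{\dagger}$ are positive. Then, with $H=U^{\dagger}VM^{\dagger}N$, $$\rho(H)\leq \min\{\rho(U^{\dagger}V),\rho(M^{\dagger}N)\}<1.$$
   Context: All matrices are real. $X^{\dagger}$ denotes the Moore–Penrose inverse of $X$, and $\rho(\cdot)$ the spectral radius. For a matrix $X$, $X\geq 0$ means that all entries of $X$ are nonnegative and at least one entry is positive; $X\geq Y$ means $X-Y\geq 0$. $R(X)$ and $N(X)$ denote range and null space. A splitting $A=U-V$ is proper if $R(U)=R(A)$ and $N(U)=N(A)$; it is a proper regular splitting if it is proper, $U^{\dagger}\geq 0$ and $V\geq 0$. *)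

From HB Require Import structures.
From mathcomp Require Import all_boot all_order all_algebra.
From mathcomp Require Import complex.
From mathcomp Require Import reals.
Set Implicit Arguments. Unset Strict Implicit. Unset Printing Implicit Defensive.
Import Order.TTheory GRing.Theory Num.Theory.
Local Open Scope ring_scope.

Section Defs.
Variable R : realType.

Definition is_MPinv m n (A : 'M[R]_(m, n)) (X : 'M[R]_(n, m)) : Prop :=
  [/\ A *m X *m A = A, X *m A *m X = X, (A *m X)^T = A *m X & (X *m A)^T = X *m A].

Definition mx_ge0 m n (X : 'M[R]_(m, n)) : Prop :=
  (forall i j, 0 <= X i j) /\ (exists i j, 0 < X i j).

Definition in_range m n (X : 'M[R]_(m, n)) (y : 'cV[R]_m) : Prop :=
  exists x : 'cV[R]_n, y = X *m x.
Definition in_null m n (X : 'M[R]_(m, n)) (x : 'cV[R]_n) : Prop :=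
  X *m x = 0.

Definition same_range m n (X Y : 'M[R]_(m, n)) : Prop :=
  forall y, in_range X y <-> in_range Y y.
Definition same_null m n (X Y : 'M[R]_(m, n)) : Prop :=
  forall x, in_null X x <-> in_null Y x.

Definition proper_splitting m n (A U V : 'M[R]_(m, n)) : Prop :=
  [/\ A = U - V, same_range U A & same_null U A].

Definition proper_regular_splitting m n (A U V : 'M[R]_(m, n))
  (Udag : 'M[R]_(n, m)) : Prop :=
  [/\ proper_splitting A U V, is_MPinv U Udag, mx_ge0 Udag & mx_ge0 V].

Definition spectrum n (A : 'M[R]_n) : seq R[i] :=
  sval (closed_field_poly_normal (char_poly (map_mx (real_complex R) A))).

Definition spectral_radius n (A : 'M[R]_n) : R :=
  \big[Num.max/0]_(z <- spectrum A) Normc.normc z.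

End Defs.

(* For a proper splitting A = U - V, the Penrose equations give U†V A† = A† - U†.
   Applied to A†e, with e the all-ones vector, this yields a positive z with
   U†V z = z - U†e < z, so rho(U†V) < 1 by the Collatz-Wielandt bound.
   If rho(U†V) < t < 1, each eigenvalue mu of V A† gives the eigenvalue mu / (1 + mu)
   of U†V, whence rho(V A†) < t / (1 - t).  So V A† w < t / (1 - t) w for some w > 0,
   and x = A†w > 0 satisfies U†V M†N x = U†V x - U†V M†w <= U†V x <= t x.  Hence
   rho(U†V M†N) <= rho(U†V), and symmetrically rho(U†V M†N) <= rho(M†N U†V) <= rho(M†N).
   A nonnegative L admits, for every s > rho(L), some w > 0 with L w < s w: otherwise
   the infimum s0 of such s exceeds rho(L), (s0 - L)^-1 is nonnegative by continuity
   of adj(s - L) det(s - L), and (s0 - L)^-1 e is then admissible below s0. *)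

From HB Require Import structures.
From mathcomp Require Import all_boot all_order all_algebra.
From mathcomp Require Import complex.
From mathcomp Require Import reals.
From mathcomp Require Import polyrcf lra ring.
From mathcomp Require Import boolp classical_sets.
Import Order.TTheory GRing.Theory Num.Theory.
Local Open Scope ring_scope.
Set Implicit Arguments. Unset Strict Implicit. Unset Printing Implicit Defensive.

Lemma horner_char_poly_mx (R : comNzRingType) n (A : 'M[R]_n) (a : R) :
  map_mx (horner_eval a) (char_poly_mx A) = a%:M - A.
Proof.
apply/matrixP => i j; rewrite !mxE /horner_eval.
by rewrite hornerD hornerN hornerMn hornerX hornerC.
Qed.

Lemma horner_char_poly (R : comNzRingType) n (A : 'M[R]_n) (a : R) :
  (char_poly A).[a] = \det (a%:M - A).
Proof. by rewrite -horner_char_poly_mx det_map_mx. Qed.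

Lemma root_char_polyP (F : fieldType) n (A : 'M[F]_n) (a : F) :
  reflect (exists2 z : 'cV_n, z != 0 & A *m z = a *: z) (root (char_poly A) a).
Proof.
rewrite /root horner_char_poly -det_tr; apply: (iffP det0P) => [[v v0 hv]|[z z0 hz]].
  exists v^T; first by rewrite trmx_eq0.
  apply/eqP; rewrite eq_sym -subr_eq0 -mul_scalar_mx -mulmxBl.
  by rewrite -[_ - A]trmxK -trmx_mul hv trmx0.
exists z^T; first by rewrite trmx_eq0.
by rewrite -trmx_mul mulmxBl mul_scalar_mx hz subrr trmx0.
Qed.

Lemma eq_mx_cV (F : pzRingType) m n (B C : 'M[F]_(m, n)) :
  (forall x : 'cV_n, B *m x = C *m x) -> B = C.
Proof.
move=> h; apply/matrixP => i j.
by have /colP/(_ i) := h (delta_mx j 0); rewrite -!colE !mxE.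
Qed.

Lemma submxE (V : zmodType) m n (X Y : 'M[V]_(m, n)) i j : (X - Y) i j = X i j - Y i j.
Proof. by rewrite !mxE. Qed.

Definition nnegmx (R : numDomainType) m n (X : 'M[R]_(m, n)) := forall i j, 0 <= X i j.

Lemma nnegmx_mul (R : numDomainType) m n p (X : 'M[R]_(m, n)) (Y : 'M[R]_(n, p)) :
  nnegmx X -> nnegmx Y -> nnegmx (X *m Y).
Proof. by move=> X0 Y0 i j; rewrite mxE sumr_ge0 // => k _; rewrite mulr_ge0. Qed.

Lemma sub_scalar_mulmxE (R : pzRingType) n (L : 'M[R]_n) s (y : 'cV[R]_n) i :
  ((s%:M - L) *m y) i 0 = s * y i 0 - (L *m y) i 0.
Proof. by rewrite mulmxBl mul_scalar_mx !mxE. Qed.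

Lemma horner_adj_char_poly_mx (R : comNzRingType) n (L : 'M[R]_n) (s : R) i j :
  (\adj (char_poly_mx L) i j).[s] = \adj (s%:M - L) i j.
Proof.
by rewrite -(horner_char_poly_mx L s) -(map_mx_adj (horner_eval s)) [RHS]mxE.
Qed.

Lemma invmx_mul_sqr_det (F : fieldType) n (B : 'M[F]_n) i j : B \in unitmx ->
  invmx B i j * \det B ^+ 2 = \adj B i j * \det B.
Proof.
move=> Bu; have dB : \det B != 0 by rewrite -unitfE -unitmxE.
by rewrite /invmx Bu mxE expr2; field.
Qed.

Lemma invmx_nneg_right_closed (R : rcfType) n (L : 'M[R]_n) s0 :
  (s0%:M - L) \in unitmx ->
  (forall s, s0 < s -> (s%:M - L) \in unitmx /\ nnegmx (invmx (s%:M - L))) ->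
  nnegmx (invmx (s0%:M - L)).
Proof.
move=> u0 above i j; rewrite leNgt; apply/negP => neg.
(* Up to the positive factor [det^2], the entry is the polynomial [adj_ij * char_poly]. *)
pose q := \adj (char_poly_mx L) i j * char_poly L.
have qE s : (s%:M - L) \in unitmx ->
    q.[s] = invmx (s%:M - L) i j * \det (s%:M - L) ^+ 2.
  by move=> u; rewrite hornerM horner_adj_char_poly_mx horner_char_poly invmx_mul_sqr_det.
have det2_gt0 s : (s%:M - L) \in unitmx -> 0 < \det (s%:M - L) ^+ 2.
  by move=> u; rewrite exprn_even_gt0 //= -unitfE -unitmxE.
have q0 : 0 < - q.[s0] by rewrite oppr_gt0 qE // pmulr_llt0 // det2_gt0.
have [d d0 hd] := poly_cont s0 q q0.
have d2_gt0 : 0 < d / 2 by lra.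
have d2_lt : d / 2 < d by lra.
have [|u1 inv1] := above (s0 + d / 2); first by lra.
have : 0 <= q.[s0 + d / 2] by rewrite qE // mulr_ge0 ?inv1 // ltW ?det2_gt0.
have := hd (s0 + d / 2); rewrite addrC addKr gtr0_norm // => /(_ d2_lt).
by rewrite ltr_norml => /andP[_]; lra.
Qed.

Lemma le_of_forall_between (R : realFieldType) (a b c : R) :
  a < c -> (forall t, a < t -> t < c -> b <= t) -> b <= a.
Proof.
move=> ac h; rewrite leNgt; apply/negP => ab.
have ad : a < Num.min b c by rewrite lt_min ab.
have [a_t t_d] := midf_lt ad.
have [mb mc] : Num.min b c <= b /\ Num.min b c <= c by rewrite !ge_min !lexx orbT.
by have := h _ a_t (lt_le_trans t_d mc); rewrite leNgt (lt_le_trans t_d mb).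
Qed.

Section Spectrum.
Variable R : realType.
Local Notation C := R[i].
Local Notation normc := (@Normc.normc R).

Definition cmx m n (X : 'M[R]_(m, n)) : 'M[C]_(m, n) := map_mx (real_complex R) X.

Definition ceigenvalue n (T : 'M[R]_n) (l : C) :=
  exists2 z : 'cV[C]_n, z != 0 & cmx T *m z = l *: z.

Lemma mem_spectrum n (T : 'M[R]_n) l : l \in spectrum T <-> ceigenvalue T l.
Proof.
rewrite /spectrum; case: closed_field_poly_normal => s /= hs.
have -> : (l \in s) = root (char_poly (cmx T)) l.
  by rewrite [in RHS]hs (monicP (char_poly_monic _)) scale1r root_prod_XsubC.
by split => /root_char_polyP.
Qed.

Lemma ceigenvalue_real n (L : 'M[R]_n) (s : R) :
  root (char_poly L) s -> ceigenvalue L (s%:C)%C.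
Proof.
move=> /root_char_polyP [v v0 hv]; exists (cmx v); first by rewrite map_mx_eq0.
by rewrite -map_mxM hv map_mxZ.
Qed.

Lemma spectral_radius_ge0 n (T : 'M[R]_n) : 0 <= spectral_radius T.
Proof. exact: bigmax_ge_id. Qed.

Lemma normc_le_spectral_radius n (T : 'M[R]_n) l :
  ceigenvalue T l -> normc l <= spectral_radius T.
Proof. by move/mem_spectrum => sT; apply: le_bigmax_seq. Qed.

Lemma spectral_radius_le n (T : 'M[R]_n) a : 0 <= a ->
  (forall l, ceigenvalue T l -> normc l <= a) -> spectral_radius T <= a.
Proof.
by move=> a0 h; rewrite /spectral_radius big_seq; apply: bigmax_le => // l /mem_spectrum /h.
Qed.

Lemma spectral_radius_lt n (T : 'M[R]_n) a : 0 < a ->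
  (forall l, ceigenvalue T l -> normc l < a) -> spectral_radius T < a.
Proof.
by move=> a0 h; rewrite /spectral_radius big_seq; apply: bigmax_lt => // l /mem_spectrum /h.
Qed.

Lemma normc_real (a : R) : normc (a%:C)%C = `|a|.
Proof. by rewrite /Normc.normc /= expr0n /= addr0 sqrtr_sqr. Qed.

Lemma normc_ge0 (z : C) : 0 <= normc z.
Proof. by case: z => a b; rewrite /Normc.normc sqrtr_ge0. Qed.

Lemma normc_gt0 (z : C) : (0 < normc z) = (z != 0).
Proof.
rewrite lt_def normc_ge0 andbT; apply/idP/idP; apply: contra => /eqP.
  by move->; rewrite Normc.normc0.
by move/Normc.eq0_normc ->.
Qed.

Lemma normc_sum (I : Type) (r : seq I) (P : pred I) (F : I -> C) :
  normc (\sum_(i <- r | P i) F i) <= \sum_(i <- r | P i) normc (F i).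
Proof.
elim/big_rec2: _ => [|i y1 y2 _ h]; first by rewrite Normc.normc0.
by apply: le_trans (le_normcD (F i) y2) _; rewrite lerD2l.
Qed.

Lemma sub_scalar_unitmx n (L : 'M[R]_n) s :
  (forall l, ceigenvalue L l -> normc l < s) -> (s%:M - L) \in unitmx.
Proof.
move=> h; rewrite unitmxE unitfE -horner_char_poly; apply/negP.
by move=> /ceigenvalue_real /h; rewrite normc_real ltNge ler_norm.
Qed.

End Spectrum.

Section CollatzWielandt.
Variables (R : realType) (n : nat) (T : 'M[R]_n) (x : 'cV[R]_n).
Hypotheses (T0 : nnegmx T) (x0 : forall i, 0 < x i 0).
Local Notation normc := (@Normc.normc R).

Lemma exists_row_normc_ceigenvalue_le l :
  ceigenvalue T l -> exists i, normc l * x i 0 <= (T *m x) i 0.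
Proof.
move=> [z /cV0Pn [j zj] Tz].
(* Compare at a row where [|z_k| / x_k] is maximal. *)
pose F k := normc (z k 0) / x k 0.
have [i _ Fi] := @arg_maxP _ _ _ j predT F isT.
have zF k : normc (z k 0) <= F i * x k 0.
  by have := Fi k isT; rewrite /F /= ler_pdivrMr.
have Fi0 : 0 < F i by apply: lt_le_trans (Fi j isT); rewrite divr_gt0 ?normc_gt0.
exists i; rewrite -(ler_pM2l Fi0) mulrCA divfK ?gt_eqF // -Normc.normcM.
have -> : l * z i 0 = (cmx T *m z) i 0 by rewrite Tz mxE.
rewrite !mxE mulr_sumr; apply: le_trans (normc_sum _ _ _) _.
apply: ler_sum => k _; rewrite mxE Normc.normcM normc_real ger0_norm // mulrCA.
by apply: ler_wpM2l.
Qed.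

Lemma normc_ceigenvalue_le a l : (forall i, (T *m x) i 0 <= a * x i 0) ->
  ceigenvalue T l -> normc l <= a.
Proof.
move=> Tx /exists_row_normc_ceigenvalue_le [i hi].
by rewrite -(ler_pM2r (x0 i)); apply: le_trans hi (Tx i).
Qed.

Lemma normc_ceigenvalue_lt a l : (forall i, (T *m x) i 0 < a * x i 0) ->
  ceigenvalue T l -> normc l < a.
Proof.
move=> Tx /exists_row_normc_ceigenvalue_le [i hi].
by rewrite -(ltr_pM2r (x0 i)); apply: le_lt_trans hi (Tx i).
Qed.

End CollatzWielandt.

Section Subinvariant.
Variables (R : realType) (n : nat) (L : 'M[R]_n).
Hypothesis L0 : nnegmx L.

Definition subinvariant (s : R) :=
  exists2 w : 'cV[R]_n, (forall i, 0 < w i 0) & (forall i, (L *m w) i 0 < s * w i 0).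

Lemma subinvariant_le s s' : subinvariant s -> s <= s' -> subinvariant s'.
Proof.
move=> [w w0 Lw] ss'; exists w => // i.
by apply: lt_le_trans (Lw i) _; rewrite ler_wpM2r // ltW.
Qed.

Lemma subinvariant_rowsum : subinvariant (1 + \sum_i \sum_j L i j).
Proof.
exists (const_mx 1 : 'cV[R]_n) => i; first by rewrite mxE ltr01.
have -> : (L *m (const_mx 1 : 'cV[R]_n)) i 0 = \sum_j L i j.
  by rewrite mxE; apply: eq_bigr => k _; rewrite mxE mulr1.
have : \sum_j L i j <= \sum_i \sum_j L i j.
  by rewrite [X in _ <= X](bigD1 i) //= lerDl sumr_ge0 // => k _; rewrite sumr_ge0.
by rewrite mxE mulr1; lra.
Qed.

Lemma subinvariant_unitmx s : subinvariant s -> (s%:M - L) \in unitmx.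
Proof. by move=> [w w0 Lw]; apply: sub_scalar_unitmx => l; apply: normc_ceigenvalue_lt Lw. Qed.

Lemma subinvariant_monotone s (y : 'cV[R]_n) : subinvariant s ->
  (forall i, 0 <= ((s%:M - L) *m y) i 0) -> forall i, 0 <= y i 0.
Proof.
move=> [w w0 Lw] hy i0; rewrite leNgt; apply/negP => yi0.
(* Compare at a row where [y_k / w_k] is minimal. *)
pose F k := y k 0 / w k 0.
have [i _ Fi] := @arg_minP _ _ _ i0 predT F isT.
have Fi0 : F i < 0.
  by apply: le_lt_trans (Fi i0 isT) _; rewrite /F /= pmulr_llt0 ?invr_gt0.
have yF k : F i * w k 0 <= y k 0 by have := Fi k isT; rewrite /F /= ler_pdivlMr.
have yi : y i 0 = F i * w i 0 by rewrite /F /= divfK ?gt_eqF.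
have : (L *m y) i 0 <= s * y i 0 by have := hy i; rewrite sub_scalar_mulmxE subr_ge0.
apply/negP; rewrite -ltNge yi mulrCA.
apply: (@lt_le_trans _ _ (F i * (L *m w) i 0)); first by rewrite ltr_nM2l.
by rewrite !mxE mulr_sumr; apply: ler_sum => k _; rewrite mulrCA ler_wpM2l.
Qed.

Lemma subinvariant_invmx_nneg s : subinvariant s -> nnegmx (invmx (s%:M - L)).
Proof.
move=> hs i j; have u := subinvariant_unitmx hs.
have := subinvariant_monotone (y := invmx (s%:M - L) *m delta_mx j 0) hs.
rewrite mulmxA mulmxV // mul1mx -colE => h.
by have := h _ i; rewrite mxE; apply=> k; rewrite mxE ler0n.
Qed.

Lemma invmx_nneg_subinvariant s : 0 < s -> (s%:M - L) \in unitmx ->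
  nnegmx (invmx (s%:M - L)) -> exists2 d, 0 < d & subinvariant (s - d).
Proof.
move=> s0 u inv0.
pose w : 'cV[R]_n := invmx (s%:M - L) *m const_mx 1.
have w0 : nnegmx w by apply: nnegmx_mul => // k l; rewrite mxE.
have Lw0 : nnegmx (L *m w) by apply: nnegmx_mul.
have sw i : s * w i 0 - (L *m w) i 0 = 1.
  by rewrite -sub_scalar_mulmxE mulmxA mulmxV // mul1mx mxE.
pose S := \sum_k w k 0.
have wS i : w i 0 <= S by rewrite /S (bigD1 i) //= lerDl sumr_ge0.
have S0 : 0 <= S by rewrite sumr_ge0.
exists (1 + S)^-1; first by rewrite invr_gt0; lra.
exists w => i.
  by rewrite -(pmulr_rgt0 _ s0); have := sw i; have := Lw0 i 0; lra.
have : (1 + S)^-1 * w i 0 < 1.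
  by rewrite mulrC ltr_pdivrMr ?mul1r; have := wS i; lra.
by rewrite mulrBl; have := sw i; lra.
Qed.

Lemma subinvariant_gt_spectral_radius g : spectral_radius L < g -> subinvariant g.
Proof.
move=> Lg; apply: contrapT => ng.
pose S : set R := subinvariant.
have gS : lbound S g.
  move=> s Ss; rewrite leNgt; apply/negP => sg; apply: ng.
  exact: subinvariant_le Ss (ltW sg).
have S0 : (S !=set0)%classic by exists (1 + \sum_i \sum_j L i j); exact: subinvariant_rowsum.
have g_inf : g <= inf S := lb_le_inf S0 gS.
have above s : inf S < s -> subinvariant s.
  by move=> /(inf_lt S0) [s' Ss' s's]; exact: subinvariant_le Ss' (ltW s's).
have u : ((inf S)%:M - L) \in unitmx.
  apply: sub_scalar_unitmx => l /normc_le_spectral_radius; lra.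
have inv0 : nnegmx (invmx ((inf S)%:M - L)).
  apply: invmx_nneg_right_closed u _ => s /above hs.
  by split; [exact: subinvariant_unitmx | exact: subinvariant_invmx_nneg].
have [|d d0 Sd] := invmx_nneg_subinvariant _ u inv0.
  by have := spectral_radius_ge0 L; lra.
have : inf S <= inf S - d by apply: ge_inf Sd; exists g.
lra.
Qed.

End Subinvariant.

Lemma le_spectral_radius_mulmxC (R : realType) n (X Y : 'M[R]_n) :
  spectral_radius (X *m Y) <= spectral_radius (Y *m X).
Proof.
apply: spectral_radius_le (spectral_radius_ge0 _) _ => l [z z0].
rewrite /cmx map_mxM -mulmxA => XYz.
have [->|l0] := eqVneq l 0; first by rewrite Normc.normc0 spectral_radius_ge0.
apply: normc_le_spectral_radius; exists (cmx Y *m z).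
  apply: contra z0 => /eqP Yz0; move: XYz; rewrite /cmx Yz0 mulmx0 => /esym/eqP.
  by rewrite scaler_eq0 (negbTE l0).
by rewrite /cmx map_mxM -!mulmxA XYz -scalemxAr.
Qed.

Lemma mulmx_rowsum_gt0 (R : realType) m n (X : 'M[R]_(n, m)) (w : 'cV[R]_m) :
  nnegmx X -> (forall i, 0 < \sum_j X i j) -> (forall j, 0 < w j 0) ->
  forall i, 0 < (X *m w) i 0.
Proof.
move=> X0 Xrow w0 i.
have [j Xij] : exists j, 0 < X i j.
  apply/existsP; apply: contraLR (Xrow i) => /existsPn Xi0.
  by rewrite -leNgt sumr_le0 // => j _; rewrite leNgt Xi0.
rewrite mxE (bigD1 j) //=; apply: lt_le_trans (_ : 0 < X i j * w j 0) _.
  by rewrite mulr_gt0.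
by rewrite lerDl sumr_ge0 // => k _; rewrite mulr_ge0 // ltW.
Qed.

Section ProperSplitting.
Variables (R : realType) (m n : nat) (A U V : 'M[R]_(m, n)) (Ad Ud : 'M[R]_(n, m)).
Hypotheses (hA : is_MPinv A Ad) (hU : is_MPinv U Ud) (hs : proper_splitting A U V).

Lemma proper_splitting_range_proj : A *m Ad *m U = U.
Proof.
case: hs => _ rUA _; case: hA => AAdA _ _ _.
apply: eq_mx_cV => x; have [y Uxy] : in_range A (U *m x) by apply/rUA; exists x.
by rewrite -[LHS]mulmxA Uxy mulmxA AAdA.
Qed.

Lemma proper_splitting_null_proj : A *m Ud *m U = A.
Proof.
case: hs => _ _ nUA; case: hU => UUdU _ _ _.
apply: eq_mx_cV => x.
have : in_null A (x - Ud *m U *m x).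
  by apply/nUA; rewrite /in_null mulmxBr !mulmxA UUdU subrr.
by rewrite /in_null mulmxBr => /eqP; rewrite subr_eq0 !mulmxA => /eqP ->.
Qed.

Lemma proper_splitting_mpinv_projl : Ud *m U *m Ad = Ad.
Proof.
case: hA => _ AdAAd _ AdA_sym; case: hU => _ _ _ UdU_sym.
have AdE : Ad = A^T *m Ad^T *m Ad by rewrite -trmx_mul AdA_sym AdAAd.
have UdUAt : Ud *m U *m A^T = A^T.
  by rewrite -UdU_sym -trmx_mul mulmxA proper_splitting_null_proj.
by rewrite [in LHS]AdE !mulmxA UdUAt -AdE.
Qed.

Lemma proper_splitting_mpinv_projr : Ud *m A *m Ad = Ud.
Proof.
case: hA => _ _ AAd_sym _; case: hU => _ UdUUd UUd_sym _.
have UdE : Ud = Ud *m Ud^T *m U^T by rewrite -mulmxA -trmx_mul UUd_sym mulmxA UdUUd.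
have UtAAd : U^T *m (A *m Ad) = U^T.
  by rewrite -{1}AAd_sym -trmx_mul proper_splitting_range_proj.
by rewrite [in LHS]UdE -!mulmxA UtAAd !mulmxA -UdE.
Qed.

Lemma proper_splitting_mpinv_identity : Ud *m V *m Ad = Ad - Ud.
Proof.
have -> : V = U - A by case: hs => -> _ _; rewrite opprB addrC subrK.
by rewrite mulmxBr mulmxBl proper_splitting_mpinv_projl proper_splitting_mpinv_projr.
Qed.

Lemma iteration_mulmx_mpinv (w : 'cV[R]_m) : Ud *m V *m (Ad *m w) = Ad *m w - Ud *m w.
Proof. by rewrite mulmxA proper_splitting_mpinv_identity mulmxBl. Qed.

End ProperSplitting.

Section RegularSplitting.
Variables (R : realType) (m n : nat) (A U V : 'M[R]_(m, n)) (Ad Ud : 'M[R]_(n, m)).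
Hypotheses (hA : is_MPinv A Ad) (Ad0 : nnegmx Ad).
Hypotheses (hU : is_MPinv U Ud) (hs : proper_splitting A U V).
Hypotheses (Ud0 : nnegmx Ud) (V0 : nnegmx V) (Ud_rowsum : forall i, 0 < \sum_j Ud i j).
Local Notation normc := (@Normc.normc R).

Lemma spectral_radius_iteration_lt1 : spectral_radius (Ud *m V) < 1.
Proof.
pose e : 'cV[R]_m := const_mx 1.
have e0 : nnegmx e by move=> i j; rewrite mxE.
have Ude0 : forall i, 0 < (Ud *m e) i 0.
  by apply: mulmx_rowsum_gt0 => // j; rewrite mxE ltr01.
have TAde := iteration_mulmx_mpinv hA hU hs e.
have Ade0 i : 0 < (Ad *m e) i 0.
  have := nnegmx_mul (nnegmx_mul Ud0 V0) (nnegmx_mul Ad0 e0) i 0.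
  by rewrite TAde submxE; have := Ude0 i; lra.
apply: spectral_radius_lt => // l el.
apply: (normc_ceigenvalue_lt (nnegmx_mul Ud0 V0) Ade0 _ el) => i.
by rewrite TAde submxE; have := Ude0 i; lra.
Qed.

Lemma ceigenvalue_iteration_of_VAd mu : ceigenvalue (V *m Ad) mu -> mu != 0 ->
  1 + mu != 0 /\ ceigenvalue (Ud *m V) (mu / (1 + mu)).
Proof.
move=> [z z0]; rewrite /cmx map_mxM => VAdz mu0.
pose y := cmx Ad *m z; pose w := cmx Ud *m z.
have Vy : cmx V *m y = mu *: z by rewrite mulmxA.
have y0 : y != 0.
  apply: contra z0 => /eqP y0; move: Vy; rewrite y0 mulmx0 => /esym/eqP.
  by rewrite scaler_eq0 (negbTE mu0).
have Ty_sub : cmx (Ud *m V) *m y = y - w.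
  rewrite /cmx map_mxM /y mulmxA -!map_mxM.
  by rewrite (proper_splitting_mpinv_identity hA hU hs) map_mxB mulmxBl.
have Ty_mu : cmx (Ud *m V) *m y = mu *: w by rewrite /cmx map_mxM -mulmxA Vy scalemxAr.
have yE : y = (1 + mu) *: w.
  by apply/eqP; rewrite scalerDl scale1r addrC -subr_eq -Ty_sub Ty_mu.
have mu1 : 1 + mu != 0 by apply: contra y0 => /eqP mu1; rewrite yE mu1 scale0r.
by split => //; exists y => //; rewrite Ty_mu yE scalerA divfK.
Qed.

Lemma spectral_radius_VAd_lt t : spectral_radius (Ud *m V) < t -> t < 1 ->
  spectral_radius (V *m Ad) < t / (1 - t).
Proof.
move=> Tt t1; have t0 : 0 < t := le_lt_trans (spectral_radius_ge0 _) Tt.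
have g0 : 0 < t / (1 - t) by rewrite divr_gt0 // subr_gt0.
apply: spectral_radius_lt => // mu emu.
have [->|mu0] := eqVneq mu 0; first by rewrite Normc.normc0.
have [mu1 eT] := ceigenvalue_iteration_of_VAd emu mu0.
have := le_lt_trans (normc_le_spectral_radius eT) Tt.
rewrite Normc.normcM Normc.normcV ltr_pdivrMr ?normc_gt0 // => mu_lt.
have : normc (1 + mu) <= 1 + normc mu.
  by apply: le_trans (le_normcD _ _) _; rewrite Normc.normc1.
rewrite ltr_pdivlMr ?subr_gt0 //; nra.
Qed.

Lemma iteration_subinvariant_mpinv t (w : 'cV[R]_m) :
  0 < t -> t < 1 -> (forall i, 0 < w i 0) ->
  (forall i, (V *m Ad *m w) i 0 < t / (1 - t) * w i 0) ->
  (forall i, 0 < (Ad *m w) i 0) /\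
  (forall i, (Ud *m V *m (Ad *m w)) i 0 <= t * (Ad *m w) i 0).
Proof.
move=> t0 t1 w0; set g := t / (1 - t) => VAdw.
have w_nn : nnegmx w by move=> i j; rewrite ord1 ltW.
have Udw0 : forall i, 0 < (Ud *m w) i 0 := mulmx_rowsum_gt0 Ud0 Ud_rowsum w0.
have TxE : Ud *m V *m (Ad *m w) = Ud *m (V *m Ad *m w) by rewrite !mulmxA.
have Tx0 i : 0 <= (Ud *m (V *m Ad *m w)) i 0.
  exact: nnegmx_mul Ud0 (nnegmx_mul (nnegmx_mul V0 Ad0) w_nn) i 0.
have xE i : (Ad *m w) i 0 = (Ud *m w) i 0 + (Ud *m (V *m Ad *m w)) i 0.
  by rewrite -TxE (iteration_mulmx_mpinv hA hU hs) submxE; lra.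
have Tx_le i : (Ud *m (V *m Ad *m w)) i 0 <= g * (Ud *m w) i 0.
  rewrite [X in X <= _]mxE [(Ud *m w) i 0]mxE mulr_sumr; apply: ler_sum => j _.
  by rewrite mulrCA ler_wpM2l // ltW.
have g_t : (1 - t) * g = t by rewrite /g mulrC divfK // subr_eq0 eq_sym lt_eqF.
split => i; rewrite xE; first by have := Udw0 i; have := Tx0 i; lra.
have t1' : 0 <= 1 - t by lra.
by have := ler_wpM2l t1' (Tx_le i); rewrite mulrA g_t TxE; lra.
Qed.

Lemma spectral_radius_iteration_mul_le (M N : 'M[R]_(m, n)) (Md : 'M[R]_(n, m)) :
  is_MPinv M Md -> proper_splitting A M N -> nnegmx Md -> nnegmx N ->
  spectral_radius (Ud *m V *m (Md *m N)) <= spectral_radius (Ud *m V).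
Proof.
move=> hM hsM Md0 N0.
apply: le_of_forall_between spectral_radius_iteration_lt1 _ => t Tt t1.
have t0 : 0 < t := le_lt_trans (spectral_radius_ge0 _) Tt.
have [w w0 VAdw] := subinvariant_gt_spectral_radius (nnegmx_mul V0 Ad0)
  (spectral_radius_VAd_lt Tt t1).
have [x0 Tx] := iteration_subinvariant_mpinv t0 t1 w0 VAdw.
have w_nn : nnegmx w by move=> i j; rewrite ord1 ltW.
have H0 := nnegmx_mul (nnegmx_mul Ud0 V0) (nnegmx_mul Md0 N0).
apply: spectral_radius_le (ltW t0) _ => l el.
apply: (normc_ceigenvalue_le H0 x0 _ el) => i.
apply: le_trans (Tx i).
have -> : Ud *m V *m (Md *m N) *m (Ad *m w) = Ud *m V *m (Ad *m w) - Ud *m V *m (Md *m w).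
  by rewrite -mulmxA (iteration_mulmx_mpinv hA hM hsM) mulmxBr.
rewrite submxE.
by have := nnegmx_mul (nnegmx_mul Ud0 V0) (nnegmx_mul Md0 w_nn) i 0; lra.
Qed.

End RegularSplitting.

Unset Implicit Arguments.

Theorem theorem4p9 (R : realType) (m n : nat)
  (A M N U V : 'M[R]_(m, n)) (Adag Mdag Udag : 'M[R]_(n, m)) :
  is_MPinv A Adag -> mx_ge0 Adag ->
  proper_regular_splitting A M N Mdag ->
  proper_regular_splitting A U V Udag ->
  same_range (M + U - A) A -> same_null (M + U - A) A ->
  (forall i, 0 < \sum_j Udag i j) ->
  (forall i, 0 < \sum_j Mdag i j) ->
  let H := Udag *m V *m Mdag *m N in
  spectral_radius H <= Num.min (spectral_radius (Udag *m V)) (spectral_radius (Mdag *m N))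
  /\ Num.min (spectral_radius (Udag *m V)) (spectral_radius (Mdag *m N)) < 1.
Proof.
move=> hA [Ad0 _] [hsM hM [Md0 _] [N0 _]] [hsU hU [Ud0 _] [V0 _]] _ _ Ud_rs Md_rs H.
have UV_lt1 := spectral_radius_iteration_lt1 hA Ad0 hU hsU Ud0 V0 Ud_rs.
have H_UV : spectral_radius H <= spectral_radius (Udag *m V).
  rewrite /H -mulmxA.
  exact: spectral_radius_iteration_mul_le hA Ad0 hU hsU Ud0 V0 Ud_rs _ _ _ hM hsM Md0 N0.
have H_MN : spectral_radius H <= spectral_radius (Mdag *m N).
  rewrite /H -mulmxA; apply: le_trans (le_spectral_radius_mulmxC _ _) _.
  exact: spectral_radius_iteration_mul_le hA Ad0 hM hsM Md0 N0 Md_rs _ _ _ hU hsU Ud0 V0.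
by rewrite le_min H_UV H_MN gt_min UV_lt1.
Qed.
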